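(* Let $N\ge1$, $M\in\mathbb{N}^*$, $p\in[1,\infty)$, and let $(u_k)_{k\ge1}$ be a sequence of nonnegative numbers. Let $\psi\in C^\infty_c(\mathbb{R})$ be a function which is not a polynomial of degree at most $M-1$ and with $\mathrm{supp}(\psi)\subset[-\eta,\eta]$ for some $\eta\ge1$, and set \[f(x_1,\dots,x_N)=\sum_{k\ge1}u_k\,\psi\!\left(\frac{x_1-2(M+\eta)k}{2^{-k}}\right)\cdots\psi\!\left(\frac{x_N-2(M+\eta)k}{2^{-k}}\right).\] Then there is a constant $c>0$ depending only on $N$, $p$, $M$ and $\psi$ such that for every $j\ge1$, \[\sup_{2^{-(j+1)}\le|h|\le2^{-j}}\|\Delta_h^Mf\|_{L^p(\mathbb{R}^N)}\ge c\,u_j\,2^{-jN/p}.\]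
   Context: $\Delta_h^Mf(x):=\sum_{j=0}^M(-1)^{M-j}\binom{M}{j}f(x+jh)$ for $x,h\in\mathbb{R}^N$. *)

From HB Require Import structures.
From mathcomp Require Import all_boot all_order all_algebra.
From mathcomp Require Import all_classical all_reals all_analysis.
Unset Printing Implicit Defensive.
Import Order.TTheory GRing.Theory Num.Theory.
Import numFieldNormedType.Exports.
Local Open Scope ring_scope.

Section Defs.
Context {R : realType}.

(* Points of R^N are row vectors 'rV[R]_N; coordinate i of x is x ord0 i. *)

Definition eucl_norm (N : nat) (h : 'rV[R]_N) : R :=
  Num.sqrt (\sum_(i < N) h ord0 i ^+ 2).

Definition fdiff (N M : nat) (h : 'rV[R]_N) (f : 'rV[R]_N -> R)
    (x : 'rV[R]_N) : R :=
  \sum_(j < M.+1) (-1) ^+ (M - j) * ('C(M, j))%:R * f (x + j%:R *: h).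

Definition rcons_row (n : nat) (t : R) (y : 'rV[R]_n) : 'rV[R]_n.+1 :=
  \row_(i < n.+1) match unlift ord0 i with Some k => y ord0 k | None => t end.

(* Integral over R^n w.r.t. Lebesgue measure, as the iterated integral
   of one-dimensional Lebesgue integrals (Tonelli; used only for
   nonnegative integrands). *)
Fixpoint iter_integral (n : nat) : ('rV[R]_n -> \bar R) -> \bar R :=
  match n with
  | 0 => fun F => F 0
  | n'.+1 => fun F =>
      (\int[@lebesgue_measure R]_t iter_integral n' (fun y => F (rcons_row n' t y)))%E
  end.

Definition Lp_norm (N : nat) (p : R) (g : 'rV[R]_N -> R) : \bar R :=
  poweR (iter_integral N (fun x => (`|g x| `^ p)%:E)) p^-1.

Definition smooth (psi : R -> R) : Prop :=
  forall (n : nat) (x : R), derivable (derive1n n psi) x 1.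

Definition compact_support (psi : R -> R) : Prop :=
  exists a : R, forall x, a < `|x| -> psi x = 0.

Definition is_poly_deg_le (d : nat) (psi : R -> R) : Prop :=
  exists q : {poly R}, (size q <= d.+1)%N /\ forall x, psi x = q.[x].

Definition fterm (N M : nat) (eta : R) (psi : R -> R) (u : nat -> R)
    (k : nat) (x : 'rV[R]_N) : R :=
  u k * \prod_(i < N)
    psi ((x ord0 i - 2 * (M%:R + eta) * k%:R) / (2 ^- k)).

Definition fsum (N M : nat) (eta : R) (psi : R -> R) (u : nat -> R)
    (x : 'rV[R]_N) : R :=
  limn (fun n => \sum_(1 <= k < n) fterm N M eta psi u k x).

End Defs.

From HB Require Import structures.
From mathcomp Require Import all_boot all_order all_algebra.
From mathcomp Require Import all_classical all_reals all_analysis.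
From mathcomp Require Import ring lra.
Import Order.TTheory GRing.Theory Num.Theory.
Import numFieldNormedType.Exports.
Local Open Scope ring_scope.
Local Open Scope classical_set_scope.

(* Take h = 2^-j e_1.  The bumps of f sit at the points 2 (M + eta) k (1, ..., 1)
   and have width at most eta 2^-k, so near the j-th centre all other bumps
   vanish and, with s_i = 2^j (x_i - 2 (M + eta) j),
     Delta_h^M f (x) = u_j (Delta_1^M psi)(s_1) psi(s_2) ... psi(s_N).
   A nonzero compactly supported psi has Delta_1^M psi <> 0 somewhere (the
   hypothesis that psi is not a polynomial is only used to get psi <> 0), so
   by continuity |Delta_1^M psi| and |psi| are bounded below near some points
   t_1 and t_2.  This gives |Delta_h^M f| >= c u_j on a box of volume
   c' 2^(-jN), whence the L^p bound. *)

Section iterated_integral.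
Context {R : realType}.
Local Notation iint := (@iter_integral R).

(* No measurability is needed: for nonnegative integrands the integral is
   the supremum of the integrals of the simple functions below them. *)
Lemma le_integral_nonneg (f g : R -> \bar R) :
  (forall t, 0 <= f t)%E -> (forall t, f t <= g t)%E ->
  (\int[@lebesgue_measure R]_t f t <= \int[@lebesgue_measure R]_t g t)%E.
Proof.
move=> f0 fg; have g0 t : (0 <= g t)%E by exact: le_trans (fg t).
rewrite !ge0_integralTE //; apply: ereal_sup_le => _ [h hf <-].
by exists h => //= t; exact: le_trans (hf t) (fg t).
Qed.

Lemma iter_integral_ge0 n (F : 'rV[R]_n -> \bar R) :
  (forall x, 0 <= F x)%E -> (0 <= iint n F)%E.
Proof.
elim: n F => [|n IH] F F0 /=; first exact: F0.
by apply: integral_ge0 => t _; exact: IH.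
Qed.

Lemma le_iter_integral n (F G : 'rV[R]_n -> \bar R) :
  (forall x, 0 <= F x)%E -> (forall x, F x <= G x)%E -> (iint n F <= iint n G)%E.
Proof.
elim: n F G => [|n IH] F G F0 FG /=; first exact: FG.
apply: le_integral_nonneg => t; first exact: iter_integral_ge0.
exact: IH.
Qed.

Lemma rcons_row_ord0 n (t : R) (y : 'rV[R]_n) : rcons_row n t y ord0 ord0 = t.
Proof. by rewrite mxE unlift_none. Qed.

Lemma rcons_row_lift n (t : R) (y : 'rV[R]_n) (i : 'I_n) :
  rcons_row n t y ord0 (lift ord0 i) = y ord0 i.
Proof. by rewrite mxE liftK. Qed.

Lemma integral_scaled_indic_itv (k a b : R) : 0 <= k -> a <= b ->
  (\int[@lebesgue_measure R]_t (k * \1_`[a, b] t)%:E = (k * (b - a))%:E)%E.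
Proof.
move=> k0 ab; rewrite integralZl_indic //; last by move=> k0'; move: k0; rewrite leNgt k0'.
(* [integral_indic] leaves the measure under its Lebesgue-Stieltjes name. *)
rewrite integral_indic // setIT.
rewrite -[X in (_ * X)%E]/(lebesgue_measure `[a, b]) lebesgue_measure_itv /= lte_fin.
case: ltP => [_|ba]; first by rewrite -EFinB -EFinM.
by rewrite (@le_anti _ _ a b) ?ab ?ba // subrr mulr0 mule0.
Qed.

Lemma iter_integral_box n (k : R) (lo hi : nat -> R) : 0 <= k ->
  (forall i, lo i <= hi i) ->
  iint n (fun x => (k * \prod_(i < n) \1_`[lo i, hi i] (x ord0 i))%:E) =
  (k * \prod_(i < n) (hi i - lo i))%:E.
Proof.
elim: n k lo hi => [|n IH] k lo hi k0 lohi /=; first by rewrite !big_ord0.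
transitivity (\int[@lebesgue_measure R]_t
    ((k * \prod_(i < n) (hi i.+1 - lo i.+1)) * \1_`[lo 0%N, hi 0%N] t)%:E)%E.
  apply: eq_integral => t _; rewrite mulrAC.
  rewrite -(IH _ (fun i => lo i.+1) (fun i => hi i.+1)) //; last first.
    by rewrite mulr_ge0 // indic_ge0.
  congr iter_integral; apply: funext => y; congr EFin.
  rewrite big_ord_recl rcons_row_ord0 mulrA; congr (_ * _).
  by apply: eq_bigr => i _; rewrite rcons_row_lift.
rewrite integral_scaled_indic_itv //; last first.
  by rewrite mulr_ge0 // prodr_ge0 // => i _; rewrite subr_ge0.
by rewrite big_ord_recl mulrAC -mulrA.
Qed.

Lemma Lp_norm_ge_box n (p K : R) (a r : nat -> R) (g : 'rV[R]_n -> R) :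
  0 < p -> 0 <= K -> (forall i, 0 <= r i) ->
  (forall x : 'rV[R]_n, (forall i : 'I_n, `|x ord0 i - a i| <= r i) -> K <= `|g x|) ->
  ((K * (\prod_(i < n) (2 * r i)) `^ p^-1)%:E <= Lp_norm n p g)%E.
Proof.
move=> p0 K0 r0 gK.
pose box (x : 'rV[R]_n) : R := \prod_(i < n) \1_`[a i - r i, a i + r i] (x ord0 i).
have lohi i : a i - r i <= a i + r i by rewrite lerD2l (le_trans _ (r0 i)) // oppr_le0.
have indic_box : (iint n (fun x => (K `^ p * box x)%:E) <=
                  iint n (fun x => (`|g x| `^ p)%:E))%E.
  apply: le_iter_integral => x.
    by rewrite lee_fin mulr_ge0 ?powR_ge0 // prodr_ge0 // => i _; exact: indic_ge0.
  rewrite lee_fin /box.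
  have [inbox | /existsNP[i /negP outi]] :=
    pselect (forall i : 'I_n, `|x ord0 i - a i| <= r i); last first.
    by rewrite (bigD1 i) //= indicE memNset ?mul0r ?mulr0 ?powR_ge0 //= in_itv /= -ler_distl; exact/negP.
  rewrite big1 ?mulr1; last by move=> i _; rewrite indicE mem_set //= in_itv /= -ler_distl inbox.
  by apply: ge0_ler_powR; rewrite ?nnegrE ?normr_ge0 ?gK //; exact: ltW.
rewrite /box (@iter_integral_box n _ (fun i => a i - r i) (fun i => a i + r i)) ?powR_ge0 // in indic_box.
rewrite /Lp_norm; apply: le_trans (gt0_ler_poweR _ _ _ indic_box); last first.
- by rewrite in_itv /= leey andbT iter_integral_ge0 // => x; rewrite lee_fin powR_ge0.
- by rewrite in_itv /= leey andbT lee_fin mulr_ge0 ?powR_ge0 // prodr_ge0 // => i _; rewrite subr_ge0.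
- by rewrite invr_ge0 ltW.
rewrite poweR_EFin lee_fin powRM ?powR_ge0 //; last by rewrite prodr_ge0 // => i _; rewrite subr_ge0.
rewrite -powRrM mulfV ?gt_eqF // powRr1 //.
suff -> : \prod_(i < n) (a i + r i - (a i - r i)) = \prod_(i < n) (2 * r i) by [].
by apply: eq_bigr => i _; ring.
Qed.

End iterated_integral.

Lemma smooth_continuous {R : realType} [psi : R -> R] : smooth psi -> continuous psi.
Proof.
move=> psi_smooth x; apply/differentiable_continuous/derivable1_diffP.
exact: (psi_smooth 0%N x).
Qed.

Lemma not_poly_exists_neq0 {R : realType} [d : nat] [psi : R -> R] :
  ~ is_poly_deg_le d psi -> exists t, psi t != 0.
Proof.
move=> psi_npoly; apply: contrapT => psi0; apply: psi_npoly.
exists 0; split => [|x]; first by rewrite size_poly0.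
by rewrite horner0; apply: contrapT => /eqP psix; apply: psi0; exists x.
Qed.

Lemma continuous_norm_lb_near {R : realType} [g : R -> R] [t : R] :
  {for t, continuous g} -> g t != 0 ->
  exists d e : R, [/\ 0 < d, d <= 1, 0 < e & forall s, `|s - t| <= d -> e <= `|g s|].
Proof.
move=> g_cont gt_neq0; have gt2 : 0 < `|g t| / 2 by rewrite divr_gt0 ?normr_gt0.
have [d d_gt0 near_t] := (nbhs_ballP _ _).1 ((cvgrPdist_lt _ _).1 g_cont _ gt2).
exists (Num.min (d / 2) 1), (`|g t| / 2); split => //.
- by rewrite lt_min divr_gt0 // ltr01.
- by rewrite ge_min lexx orbT.
move=> s st; have : `|g t - g s| < `|g t| / 2.
  apply: near_t; rewrite /ball /= distrC (le_lt_trans st) // gt_min.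
  by rewrite ltr_pdivrMr // ltr_pMr // ltr1n.
have := ler_normD (g t - g s) (g s); rewrite subrK.
lra.
Qed.

Lemma ler_dist_rescale {R : numFieldType} (y c t d w : R) : 0 < w ->
  `|y - (c + t * w)| <= d * w -> `|(y - c) / w - t| <= d.
Proof.
move=> w_gt0; have -> : (y - c) / w - t = (y - (c + t * w)) / w by field; rewrite gt_eqF.
by rewrite normrM normfV (gtr0_norm w_gt0) ler_pdivrMr.
Qed.

Lemma natr_dist_ge1 {R : numDomainType} (j k : nat) : k != j -> 1 <= `|j%:R - k%:R : R|.
Proof.
move=> kj; wlog k_lt_j : j k kj / (k < j)%N => [wlog_kj|].
  case: (ltngtP k j) kj => // k_j _; first by apply: wlog_kj; rewrite ?ltn_eqF.
  by rewrite distrC; apply: wlog_kj; rewrite ?ltn_eqF.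
rewrite ger0_norm; last by rewrite subr_ge0 ler_nat ltnW.
by rewrite lerBrDr addrC natr1 ler_nat.
Qed.

Lemma powR2_expN {R : realType} (p : R) (j N : nat) :
  2 `^ (- (j%:R * N%:R / p)) = ((2 ^- j) ^+ N) `^ p^-1 :> R.
Proof.
by rewrite exprVn -exprM -powR_mulrn // -powRN -powRrM natrM mulNr.
Qed.

Section unit_step_difference.
Context {R : realType}.

Definition fdiff1 (M : nat) (psi : R -> R) (s : R) : R :=
  \sum_(m < M.+1) (-1) ^+ (M - m) * ('C(M, m))%:R * psi (s + m%:R).

Lemma fdiff1_continuous M [psi : R -> R] : continuous psi -> continuous (fdiff1 M psi).
Proof.
move=> psi_cont s; apply: cvg_big => [|m _]; first exact: add_continuous.
have psi_shift : {for s, continuous (fun x : R => psi (x + m%:R))}.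
  by apply: continuous_comp (psi_cont _); apply: cvgD; [exact: cvg_id | exact: cvg_cst].
exact: cvgMr psi_shift.
Qed.

(* [fdiff1 M psi s = 0] expresses [psi s] through [psi (s + 1)], ...,
   [psi (s + M)]; so if it vanishes identically, the zeros of psi to the
   right of its support propagate to the left, one unit at a time. *)
Lemma fdiff1_neq0 M [psi : R -> R] : compact_support psi -> (exists t, psi t != 0) ->
  exists t, fdiff1 M psi t != 0.
Proof.
move=> [A psiA] [t psit]; apply: contrapT => no_root.
have fdiff1_0 s : fdiff1 M psi s = 0 by apply: contrapT => /eqP nz; apply: no_root; exists s.
pose K := (Num.trunc `|A - t|).+1.
have AK : A < t + K%:R.
  by rewrite -ltrBlDl (le_lt_trans (ler_norm _)) // truncnS_gt.
suff psi0 k m : psi (t + K%:R - k%:R + m%:R) = 0.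
  by move/eqP: psit; apply; have := psi0 K 0%N; rewrite addr0 addrK.
elim: k m => [|k IH] m.
  apply: psiA; rewrite subr0 (lt_le_trans AK) // (le_trans _ (ler_norm _)) //.
  by rewrite lerDl.
case: m => [|m]; last by rewrite -(IH m) !mulrSr; congr psi; ring.
have := fdiff1_0 (t + K%:R - k.+1%:R); rewrite /fdiff1 big_ord_recl big1.
  rewrite addr0 subn0 bin0 mulr1 => /eqP; rewrite mulf_eq0 signr_eq0 /=.
  by rewrite addr0 => /eqP.
move=> i _; rewrite lift0 /=.
by rewrite (_ : _ + i.+1%:R = t + K%:R - k%:R + i%:R) ?IH ?mulr0 // !mulrSr; ring.
Qed.

Lemma fdiff1_support M [psi : R -> R] [eta t : R] : (forall x, eta < `|x| -> psi x = 0) ->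
  fdiff1 M psi t != 0 -> `|t| <= eta + M%:R.
Proof.
move=> psi_supp; apply: contraR; rewrite -ltNge => t_far.
rewrite /fdiff1 big1 // => m _; rewrite psi_supp ?mulr0 //.
have mM : m%:R <= M%:R :> R by rewrite ler_nat -ltnS.
have := ler_normB (t + m%:R) m%:R; rewrite addrK normr_nat.
lra.
Qed.

End unit_step_difference.

Section first_axis_step.
Context {R : realType}.

Definition hstep (n j : nat) : 'rV[R]_n.+1 :=
  \row_(i < n.+1) (if i == ord0 then 2 ^- j else 0).

Lemma eucl_norm_hstep n j : 2 ^- j.+1 <= eucl_norm n.+1 (hstep n j) <= 2 ^- j.
Proof.
rewrite /eucl_norm big_ord_recl big1 ?addr0; last first.
  by move=> i _; rewrite mxE eq_sym (negbTE (neq_lift ord0 i)) expr0n.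
rewrite mxE eqxx sqrtr_sqr ger0_norm; last by rewrite invr_ge0 exprn_ge0.
by rewrite lexx andbT lef_pV2 ?posrE ?exprn_gt0 // exprS ler_peMl // ler1n.
Qed.

End first_axis_step.

Section bumps.
Context {R : realType}.
Variables (M : nat) (eta : R) (psi : R -> R) (u : nat -> R).
Hypotheses (M_gt0 : (0 < M)%N) (eta_ge1 : 1 <= eta).
Hypothesis psi_supp : forall x, eta < `|x| -> psi x = 0.

Definition center (k : nat) : R := 2 * (M%:R + eta) * k%:R.

(* Distinct centres are [2 (M + eta)] apart. *)
Lemma center_far (j k : nat) (y : R) : k != j ->
  `|y - center j| <= M%:R + eta -> eta < `|(y - center k) / 2 ^- k|.
Proof.
move=> kj y_near_j; have M_ge1 : 1 <= M%:R :> R by rewrite ler1n.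
have jk_far : 2 * (M%:R + eta) <= `|center j - center k|.
  rewrite /center -mulrBr normrM ger0_norm; last by rewrite mulr_ge0 // addr_ge0 // (le_trans ler01).
  by apply: ler_peMr; [rewrite mulr_ge0 // addr_ge0 // (le_trans ler01) | exact: natr_dist_ge1].
have := ler_normB (y - center k) (y - center j).
rewrite opprB addrC addrA subrK => jk_le.
rewrite invrK normrM (ger0_norm (exprn_ge0 _ _)) //.
by rewrite (@lt_le_trans _ _ `|y - center k|) ?ler_peMr ?exprn_ege1 ?ler1n //; lra.
Qed.

Lemma fsum_window n j (x : 'rV[R]_n.+1) : (0 < j)%N ->
  `|x ord0 ord0 - center j| <= M%:R + eta ->
  fsum n.+1 M eta psi u x = fterm n.+1 M eta psi u j x.
Proof.
move=> j_gt0 x_near_j; rewrite /fsum; apply: lim_near_cst; first exact: Rhausdorff.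
apply: filterS (nbhs_infty_gt j) => K /= jK.
rewrite (bigD1_seq j) ?iota_uniq ?mem_index_iota ?j_gt0 //=.
rewrite big1 ?addr0 // => k kj; rewrite /fterm big_ord_recl.
by rewrite psi_supp ?mul0r ?mulr0 //; exact: (center_far j).
Qed.

Lemma fdiff_fsum_window n j (x : 'rV[R]_n.+1) : (0 < j)%N ->
  `|x ord0 ord0 - center j| + M%:R * 2 ^- j <= M%:R + eta ->
  fdiff n.+1 M (hstep n j) (fsum n.+1 M eta psi u) x =
  u j * fdiff1 M psi ((x ord0 ord0 - center j) / 2 ^- j) *
  \prod_(i < n) psi ((x ord0 (lift ord0 i) - center j) / 2 ^- j).
Proof.
move=> j_gt0 x_near_j; set w := 2 ^- j in x_near_j *.
have w_gt0 : 0 < w by rewrite invr_gt0 exprn_gt0.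
have shiftE (m : nat) i :
    (x + m%:R *: hstep n j) ord0 i = x ord0 i + (if i == ord0 then m%:R * w else 0).
  by rewrite !mxE; case: eqP; rewrite ?mulr0.
rewrite /fdiff /fdiff1 mulr_sumr mulr_suml; apply: eq_bigr => m _.
rewrite (fsum_window _ j) //; last first.
  rewrite shiftE eqxx addrAC (le_trans (ler_normD _ _)) // (le_trans _ x_near_j) //.
  rewrite lerD2l ger0_norm ?mulr_ge0 ?(ltW w_gt0) // ler_wpM2r ?(ltW w_gt0) //.
  by rewrite ler_nat -ltnS.
rewrite /fterm big_ord_recl shiftE eqxx -/(center j) addrAC mulrDl mulfK ?gt_eqF //.
under eq_bigr do rewrite shiftE eq_sym (negbTE (neq_lift ord0 _)) addr0.
ring.
Qed.

Variables (t1 d1 e1 t2 d2 e2 : R).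
Hypotheses (t1_supp : `|t1| <= eta + M%:R) (d1_le1 : d1 <= 1).
Hypotheses (d1_ge0 : 0 <= d1) (d2_ge0 : 0 <= d2) (e1_ge0 : 0 <= e1) (e2_ge0 : 0 <= e2).
Hypothesis fdiff1_lb : forall s, `|s - t1| <= d1 -> e1 <= `|fdiff1 M psi s|.
Hypothesis psi_lb : forall s, `|s - t2| <= d2 -> e2 <= `|psi s|.

Lemma fdiff_fsum_ge n j (x : 'rV[R]_n.+1) : (0 < j)%N -> 0 <= u j ->
  `|x ord0 ord0 - (center j + t1 * 2 ^- j)| <= d1 * 2 ^- j ->
  (forall i : 'I_n, `|x ord0 (lift ord0 i) - (center j + t2 * 2 ^- j)| <= d2 * 2 ^- j) ->
  u j * e1 * e2 ^+ n <= `|fdiff n.+1 M (hstep n j) (fsum n.+1 M eta psi u) x|.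
Proof.
move=> j_gt0 uj_ge0 x0_box xi_box; set w := 2 ^- j in x0_box xi_box *.
have w_gt0 : 0 < w by rewrite invr_gt0 exprn_gt0.
have w_le_half : w <= 2^-1.
  by rewrite lef_pV2 ?posrE ?exprn_gt0 // -[X in X <= _]expr1 ler_eXn2l // ltr1n.
have x0_near : `|x ord0 ord0 - center j| + M%:R * w <= (eta + 2 * M%:R + 1) * w.
  have := ler_normD (x ord0 ord0 - (center j + t1 * w)) (t1 * w).
  rewrite opprD addrA subrK normrM (gtr0_norm w_gt0); rewrite opprD addrA in x0_box.
  have : `|t1| * w <= (eta + M%:R) * w by rewrite ler_wpM2r ?(ltW w_gt0).
  have : d1 * w <= w by rewrite ler_piMl ?(ltW w_gt0).
  lra.
rewrite fdiff_fsum_window //; last first.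
  have M_ge0 : 0 <= M%:R :> R := ler0n R M.
  (* [lra] does not see section hypotheses, hence the [move:]. *)
  apply: le_trans x0_near _; rewrite (le_trans (ler_wpM2l _ w_le_half)) //;
    by move: eta_ge1; lra.
rewrite !normrM normr_prod ger0_norm // -!mulrA; apply: ler_wpM2l => //.
apply: ler_pM; rewrite ?exprn_ge0 //.
  by apply: fdiff1_lb; apply: ler_dist_rescale.
rewrite -[n in e2 ^+ n]card_ord -prodr_const.
by apply: ler_prod => i _; rewrite e2_ge0 psi_lb //; apply: ler_dist_rescale.
Qed.

Lemma Lp_norm_fdiff_fsum_ge n (p : R) j : 0 < p -> (0 < j)%N -> 0 <= u j ->
  ((e1 * e2 ^+ n * (2 * d1 * (2 * d2) ^+ n) `^ p^-1 * u j
      * 2 `^ (- (j%:R * n.+1%:R / p)))%:E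
   <= Lp_norm n.+1 p (fdiff n.+1 M (hstep n j) (fsum n.+1 M eta psi u)))%E.
Proof.
move=> p_gt0 j_gt0 uj_ge0; have w_gt0 : 0 < 2 ^- j :> R by rewrite invr_gt0 exprn_gt0.
pose a k := center j + (if k == 0%N then t1 else t2) * 2 ^- j.
pose r k := (if k == 0%N then d1 else d2) * 2 ^- j.
have vol : \prod_(i < n.+1) (2 * r i) = 2 * d1 * (2 * d2) ^+ n * (2 ^- j) ^+ n.+1.
  rewrite big_ord_recl (eq_bigr (fun _ => 2 * d2 * 2 ^- j)) => [|i _]; last by rewrite /r lift0 mulrA.
  by rewrite prodr_const card_ord /r /= exprMn exprS; ring.
apply: le_trans (@Lp_norm_ge_box _ n.+1 p _ a r _ p_gt0 _ _ _); first last.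
- by move=> x x_box; apply: fdiff_fsum_ge.
- by move=> k; rewrite /r mulr_ge0 ?(ltW w_gt0) //; case: eqP.
- by rewrite !mulr_ge0 ?exprn_ge0.
have C_ge0 : 0 <= 2 * d1 * (2 * d2) ^+ n by rewrite !mulr_ge0 ?exprn_ge0 ?mulr_ge0.
rewrite lee_fin vol [in leRHS]powRM ?exprn_ge0 ?(ltW w_gt0) //.
have -> : 2 `^ (- (j%:R * n.+1%:R / p)) = ((2 ^- j) ^+ n.+1) `^ p^-1 := powR2_expN p j n.+1.
by rewrite le_eqVlt; apply/orP; left; apply/eqP; ring.
Qed.

End bumps.

Arguments Lp_norm_fdiff_fsum_ge {R M eta psi u} M_gt0 eta_ge1 psi_supp {t1 d1 e1 t2 d2 e2}.

Theorem lemma8p2 (R : realType) (N M : nat) (p : R) (psi : R -> R) :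
  (1 <= N)%N -> (1 <= M)%N -> 1 <= p ->
  smooth psi -> compact_support psi -> ~ is_poly_deg_le (M.-1) psi ->
  exists c : R, 0 < c /\
    forall eta : R, 1 <= eta -> (forall x, eta < `|x| -> psi x = 0) ->
    forall u : nat -> R, (forall k, 0 <= u k) ->
    forall j : nat, (1 <= j)%N ->
      ((c * u j * 2 `^ (- (j%:R * N%:R / p)))%:E <=
       ereal_sup [set Lp_norm N p (fdiff N M h (fsum N M eta psi u))
                 | h in [set h : 'rV[R]_N |
                          (2 ^- j.+1 <= eucl_norm N h <= 2 ^- j)%R]])%E.
Proof.
move=> N_gt0 M_gt0 p_ge1 psi_smooth psi_cs psi_npoly; case: N N_gt0 => // n _.
have psi_cont := smooth_continuous psi_smooth.
have [t2 psi_t2] := not_poly_exists_neq0 psi_npoly.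
have [t1 fdiff1_t1] := fdiff1_neq0 M psi_cs (ex_intro _ t2 psi_t2).
have [d1 [e1 [d1_gt0 d1_le1 e1_gt0 fdiff1_lb]]] :=
  continuous_norm_lb_near (fdiff1_continuous M psi_cont t1) fdiff1_t1.
have [d2 [e2 [d2_gt0 _ e2_gt0 psi_lb]]] := continuous_norm_lb_near (psi_cont t2) psi_t2.
exists (e1 * e2 ^+ n * (2 * d1 * (2 * d2) ^+ n) `^ p^-1); split.
  by rewrite !mulr_gt0 ?exprn_gt0 // powR_gt0 // !mulr_gt0 ?exprn_gt0 ?mulr_gt0.
move=> eta eta_ge1 psi_supp u u_ge0 j j_gt0; apply: le_ereal_sup_tmp.
exists (Lp_norm n.+1 p (fdiff n.+1 M (hstep n j) (fsum n.+1 M eta psi u))).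
  by exists (hstep n j) => //; exact: eucl_norm_hstep.
apply: (Lp_norm_fdiff_fsum_ge M_gt0 eta_ge1 psi_supp (fdiff1_support M psi_supp fdiff1_t1)
          d1_le1 (ltW d1_gt0) (ltW d2_gt0) (ltW e1_gt0) (ltW e2_gt0) fdiff1_lb psi_lb) => //.
lra.
Qed.
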